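(* Let $\mathcal H$ be a connected $As^c$-$Mag$-bialgebra and define $e:\bar{\mathcal H}\to\bar{\mathcal H}$ by $e=\mathrm{id}+\sum_{n\ge1}(-1)^n\omega^{n+1}\circ\delta^n$. Then: (i) $e(\omega_r^n(x_1,\dots,x_n))=0$ for all $n\ge2$ and all $x_1,\dots,x_n\in\mathrm{Prim}\,\mathcal H$; (ii) $\delta\circ e=0$; (iii) the restriction of $e$ to $\mathrm{Prim}\,\mathcal H$ is the identity.
   Context: An $As^c$-$Mag$-bialgebra is a vector space $\mathcal H$ over a field with a bilinear product $\cdot$ (not assumed associative) with two-sided unit $1$ and a coassociative counital coproduct $\Delta$ with $\Delta(1)=1\otimes1$ and $\Delta(x\cdot y)=\Delta(x)\cdot(1\otimes y)+(x\otimes1)\cdot\Delta(y)-x\otimes y$, the product on $\mathcal H\otimes\mathcal H$ being componentwise. $\bar{\mathcal H}$ = kernel of the counit; reduced coproduct $\delta(x)=\Delta(x)-x\otimes1-1\otimes x$ on $\bar{\mathcal H}$; $\delta^1=\delta$, $\delta^n=(\delta\otimes\mathrm{id}^{\otimes(n-1)})\circ\delta^{n-1}:\bar{\mathcal H}\to\bar{\mathcal H}^{\otimes(n+1)}$; $\mathrm{Prim}\,\mathcal H=\ker\delta$. Connected means: for each $x\in\bar{\mathcal H}$, $\delta^n(x)=0$ for $n$ large, so the sum defining $e$ is finite. $\omega^{m}$ is the left comb $\omega^1(x)=x$, $\omega^m(x_1,\dots,x_m)=\omega^{m-1}(x_1,\dots,x_{m-1})\cdot x_m$, applied to the tensor factors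 ($\omega^{n+1}\circ\delta^n$ means applying $\omega^{n+1}$ to $\delta^n(x)\in\bar{\mathcal H}^{\otimes(n+1)}$). $\omega_r^m$ is the right comb $\omega_r^1(x)=x$, $\omega_r^m(x_1,\dots,x_m)=x_1\cdot\omega_r^{m-1}(x_2,\dots,x_m)$. *)

From HB Require Import structures.
From mathcomp Require Import all_boot all_order all_algebra.
From Stdlib Require Import ClassicalEpsilon.
Set Implicit Arguments. Unset Strict Implicit. Unset Printing Implicit Defensive.
Import GRing.Theory.
Local Open Scope ring_scope.

Section AsMag.
Variables (K : fieldType) (H : lmodType K).

(* Elements of the tensor algebra T(H) = (+)_m H^{(x)m}, represented by finite
   formal combinations of pure tensors: (c, [:: h1; ...; hm]) stands for
   c (h1 (x) ... (x) hm). *)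
Definition tens := seq (K * seq H).

Definition multilinear (W : lmodType K) (f : seq H -> W) : Prop :=
  forall (l1 l2 : seq H) (a : K) (x y : H),
    f (l1 ++ (a *: x + y) :: l2) = a *: f (l1 ++ x :: l2) + f (l1 ++ y :: l2).

Definition tens_eval (W : lmodType K) (f : seq H -> W) (s : tens) : W :=
  \sum_(p <- s) p.1 *: f p.2.

(* Equality in the tensor product (universal property: two formal combinations
   are equal as tensors iff every multilinear map takes the same value). *)
Definition teq (s t : tens) : Prop :=
  forall (W : lmodType K) (f : seq H -> W), multilinear f ->
    tens_eval f s = tens_eval f t.

Definition tscale (a : K) (s : tens) : tens := [seq (a * p.1, p.2) | p <- s].

Definition tens2 (s : seq (H * H)) : tens := [seq (1, [:: p.1; p.2]) | p <- s].

Variables (mul : H -> H -> H) (one : H) (eps : H -> K) (Delta : H -> seq (H * H)).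

Definition is_AsMag_bialgebra : Prop :=
      (forall a x y z, mul (a *: x + y) z = a *: mul x z + mul y z) /\
      (forall a x y z, mul z (a *: x + y) = a *: mul z x + mul z y) /\
      (forall x, mul one x = x /\ mul x one = x) /\
      (forall a x y, eps (a *: x + y) = a * eps x + eps y) /\
      (forall a x y, teq (tens2 (Delta (a *: x + y)))
                         (tscale a (tens2 (Delta x)) ++ tens2 (Delta y))) /\
      (* coassociativity: (Delta (x) id) Delta = (id (x) Delta) Delta *)
      (forall x, teq [seq (1, [:: q.1; q.2; p.2]) | p <- Delta x, q <- Delta p.1]
                     [seq (1, [:: p.1; q.1; q.2]) | p <- Delta x, q <- Delta p.2]) /\
      (forall x, \sum_(p <- Delta x) eps p.1 *: p.2 = x /\
                 \sum_(p <- Delta x) eps p.2 *: p.1 = x) /\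
      teq (tens2 (Delta one)) (tens2 [:: (one, one)]) /\
      (* Delta (x y) = Delta(x).(1 (x) y) + (x (x) 1).Delta(y) - x (x) y *)
      (forall x y, teq (tens2 (Delta (mul x y)))
         ([seq (1, [:: mul p.1 one; mul p.2 y]) | p <- Delta x] ++
          [seq (1, [:: mul x p.1; mul one p.2]) | p <- Delta y] ++
          [:: (-1, [:: x; y])])).

Definition delta (x : H) : tens :=
  tens2 (Delta x) ++ [:: (-1, [:: x; one]); (-1, [:: one; x])].

(* delta (x) id^{(x)(m-1)} applied to a tensor *)
Definition delta_first (s : tens) : tens :=
  flatten [seq [seq (p.1 * q.1, q.2 ++ behead p.2) | q <- delta (head 0 p.2)]
          | p <- s].

Fixpoint deltan (n : nat) (x : H) : tens :=
  if n is n'.+1 then delta_first (deltan n' x) else [:: (1, [:: x])].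

Definition barH (x : H) : Prop := eps x = 0.

Definition Prim (x : H) : Prop := barH x /\ teq (delta x) [::].

Definition connected : Prop :=
  forall x, barH x -> exists N, forall n, (N <= n)%N -> teq (deltan n x) [::].

Definition omega (l : seq H) : H :=
  if l is x :: l' then foldl mul x l' else 0.

Fixpoint omega_r (l : seq H) : H :=
  match l with
  | [::] => 0
  | [:: x] => x
  | x :: l' => mul x (omega_r l')
  end.

Definition e_trunc (N : nat) (x : H) : H :=
  x + \sum_(1 <= n < N) (-1) ^+ n *: tens_eval omega (deltan n x).

(* a level beyond which delta^n x vanishes (exists by connectedness) *)
Definition level (x : H) : nat :=
  epsilon (inhabits 0%N) (fun N => forall n, (N <= n)%N -> teq (deltan n x) [::]).

Definition e (x : H) : H := e_trunc (level x) x.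

End AsMag.

From HB Require Import structures.
From mathcomp Require Import all_boot all_order all_algebra ssrAC.
From Stdlib Require Import ClassicalEpsilon.
Set Implicit Arguments. Unset Strict Implicit. Unset Printing Implicit Defensive.
Import GRing.Theory.
Local Open Scope ring_scope.

(* Write e_N := Σ_{n<N} (-1)^n ω^{n+1} ∘ δ^n; then e = e_N as soon as δ^N vanishes, and
   e_{N+1} = id - μ ∘ (e_N ⊗ id) ∘ δ.  The compatibility δ(xy) = δ(x)(1 ⊗ y) + (x ⊗ 1)δ(y) + x ⊗ y
   and coassociativity give, by induction on N,
     δ ∘ e_N = (-1)^{N+1} Σ_{k=1}^{N} (ω^k ⊗ ω^{N+1-k}) ∘ δ^N,
   hence (ii).  For primitive x_i, δ(ω_r(x_1..x_n)) = Σ_k ω_r(x_1..x_k) ⊗ ω_r(x_{k+1}..x_n), so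
   δ^n kills ω_r(x_1..x_n), and the recursion for e_N yields e_N(ω_r(x_1..x_n)) = 0 for n ≥ 2 and
   e_N(x) = x: this is (i) and (iii).
   Tensors are only used through their pairing with multilinear maps: delta_eval F y is F applied
   to δ(y), and delta_pull is the transpose of delta_first. *)

Local Notation bilinear F := (bilinear_for *:%R *:%R F).

Section LinearMap.
Variables (K : fieldType) (W W' : lmodType K) (L : W -> W') (linL : linear L).

Let L_linear : {linear W -> W'} := HB.pack L (GRing.isLinear.Build _ _ _ _ L linL).

Lemma linear_map0 : L 0 = 0. Proof. exact: (linear0 L_linear). Qed.
Lemma linear_mapD u v : L (u + v) = L u + L v. Proof. exact: (linearD L_linear). Qed.
Lemma linear_mapB u v : L (u - v) = L u - L v. Proof. exact: (linearB L_linear). Qed.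
Lemma linear_mapZ a u : L (a *: u) = a *: L u. Proof. exact: scalable_linear linL a u. Qed.
Lemma linear_map_sum (I : Type) (r : seq I) (G : I -> W) :
  L (\sum_(i <- r) G i) = \sum_(i <- r) L (G i).
Proof. exact: (linear_sum L_linear). Qed.

End LinearMap.

Section TensorEval.
Variables (K : fieldType) (H : lmodType K) (W : lmodType K).
Implicit Types (f : seq H -> W) (s t : tens H).

Lemma tens_eval_nil f : tens_eval f [::] = 0.
Proof. by rewrite /tens_eval big_nil. Qed.

Lemma tens_eval_cat f s t : tens_eval f (s ++ t) = tens_eval f s + tens_eval f t.
Proof. by rewrite /tens_eval big_cat. Qed.

Lemma tens_eval_tscale f a s : tens_eval f (tscale a s) = a *: tens_eval f s.
Proof.
by rewrite /tens_eval big_map scaler_sumr; apply: eq_bigr => p _; rewrite scalerA.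
Qed.

Lemma tens_eval_map1 (T : Type) f (g : T -> seq H) (r : seq T) :
  tens_eval f [seq (1, g i) | i <- r] = \sum_(i <- r) f (g i).
Proof. by rewrite /tens_eval big_map; apply: eq_bigr => i _; rewrite scale1r. Qed.

Lemma tens_eval_allpairs1 (T U : Type) f (s : seq T) (t : T -> seq U)
    (g : T -> U -> seq H) :
  tens_eval f [seq (1, g x y) | x <- s, y <- t x] = \sum_(x <- s) \sum_(y <- t x) f (g x y).
Proof.
rewrite /tens_eval big_allpairs_dep; apply: eq_bigr => x _.
by apply: eq_bigr => y _; rewrite scale1r.
Qed.

Definition pair_app (F : H -> H -> W) (l : seq H) : W :=
  if l is [:: u; v] then F u v else 0.

Definition triple_app (G : H -> H -> H -> W) (l : seq H) : W :=
  if l is [:: u; v; w] then G u v w else 0.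

Lemma multilinear_pair_app F : bilinear F -> multilinear (pair_app F).
Proof.
move=> [linF1 linF2] [|u [|v [|w l1]]] [|w1 [|w2 l2]] a x y /=;
  by [apply: linF1 | apply: linF2 | rewrite scaler0 addr0].
Qed.

Lemma multilinear_triple_app G :
    (forall v w, linear (fun u => G u v w)) -> (forall u w, linear (fun v => G u v w)) ->
    (forall u v, linear (G u v)) ->
  multilinear (triple_app G).
Proof.
move=> linG1 linG2 linG3 [|u [|v [|w [|w' l1]]]] [|w1 [|w2 [|w3 l2]]] a x y /=;
  by [apply: linG1 | apply: linG2 | apply: linG3 | rewrite scaler0 addr0].
Qed.

Lemma multilinear_catr f suf : multilinear f -> multilinear (fun l => f (l ++ suf)).
Proof. by move=> linf l1 l2 a x y; rewrite -!catA /= linf. Qed.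

Lemma multilinear_cons f z : multilinear f -> multilinear (fun l => f (z :: l)).
Proof. by move=> linf l1; apply: (linf (z :: l1)). Qed.

Lemma bilinear_cons2 f suf : multilinear f -> bilinear (fun u v => f [:: u, v & suf]).
Proof. by move=> linf; split=> [w|u] a x y; [exact: (linf [::]) | exact: (linf [:: u])]. Qed.

Lemma bilinear_compl (F : H -> H -> W) (L : H -> H) :
  linear L -> bilinear F -> bilinear (fun u v => F (L u) v).
Proof.
move=> linL linF; split=> [v | u] c x y; last exact: linF.2.
by rewrite linL (linF.1 v).
Qed.

Lemma bilinear_compr (F : H -> H -> W) (L : H -> H) :
  linear L -> bilinear F -> bilinear (fun u v => F u (L v)).
Proof.
move=> linL linF; split=> [v | u] c x y; first exact: linF.1.
by rewrite linL (linF.2 u).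
Qed.

End TensorEval.

Section Bialgebra.
Variables (K : fieldType) (H : lmodType K) (mul : H -> H -> H) (one : H)
  (eps : H -> K) (Delta : H -> seq (H * H)).

Hypothesis mul_bilinear : bilinear mul.
Hypothesis mul1x : forall x, mul one x = x.
Hypothesis mulx1 : forall x, mul x one = x.
Hypothesis Delta_linear : forall a x y,
  teq (tens2 (Delta (a *: x + y))) (tscale a (tens2 (Delta x)) ++ tens2 (Delta y)).
Hypothesis Delta_coassoc : forall x,
  teq [seq (1, [:: q.1; q.2; p.2]) | p <- Delta x, q <- Delta p.1]
      [seq (1, [:: p.1; q.1; q.2]) | p <- Delta x, q <- Delta p.2].
Hypothesis Delta_one : teq (tens2 (Delta one)) (tens2 [:: (one, one)]).
Hypothesis Delta_mul : forall x y, teq (tens2 (Delta (mul x y)))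
  ([seq (1, [:: mul p.1 one; mul p.2 y]) | p <- Delta x] ++
   [seq (1, [:: mul x p.1; mul one p.2]) | p <- Delta y] ++ [:: (-1, [:: x; y])]).

Local Notation Prim := (Prim one eps Delta).
Local Notation delta := (delta one Delta).
Local Notation deltan := (deltan one Delta).
Local Notation omega := (omega mul).

Section DeltaEval.
Variable W : lmodType K.
Implicit Types (F G : H -> H -> W) (f g : seq H -> W).

Definition delta_eval F y : W := \sum_(p <- Delta y) F p.1 p.2 - F y one - F one y.

Lemma tens_eval_delta f y : tens_eval f (delta y) = delta_eval (fun u v => f [:: u; v]) y.
Proof.
by rewrite /delta tens_eval_cat tens_eval_map1 /tens_eval !big_cons big_nil !scaleN1r addr0 addrA.
Qed.

Lemma eq_delta_eval F G y :
  (forall a b, F a b = G a b) -> delta_eval F y = delta_eval G y.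
Proof. by move=> eqFG; rewrite /delta_eval !eqFG; under eq_bigr do rewrite eqFG. Qed.

Lemma delta_evalD F G y :
  delta_eval (fun a b => F a b + G a b) y = delta_eval F y + delta_eval G y.
Proof. by rewrite /delta_eval big_split /= !opprD !addrA (ACl (1*3*5*2*4*6)). Qed.

Lemma delta_evalZ c F y : delta_eval (fun a b => c *: F a b) y = c *: delta_eval F y.
Proof. by rewrite /delta_eval !scalerBr scaler_sumr. Qed.

Lemma delta_eval_sum (I : Type) (r : seq I) (F : I -> H -> H -> W) y :
  delta_eval (fun a b => \sum_(i <- r) F i a b) y = \sum_(i <- r) delta_eval (F i) y.
Proof. by rewrite /delta_eval !sumrB exchange_big. Qed.

Lemma delta_eval_linear F : bilinear F -> linear (delta_eval F).
Proof.
move=> linF a x y; have := Delta_linear a x y (multilinear_pair_app linF).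
rewrite tens_eval_cat tens_eval_tscale !tens_eval_map1 /delta_eval => ->.
by rewrite (linF.1 one) (linF.2 one) !scalerBr !opprD !addrA (ACl (1*3*5*2*4*6)).
Qed.

Lemma delta_eval_prim F x : Prim x -> bilinear F -> delta_eval F x = 0.
Proof.
move=> [_ dx0] linF; have := dx0 _ _ (multilinear_pair_app linF).
by rewrite tens_eval_delta tens_eval_nil.
Qed.

Lemma Delta_one_eval f : multilinear f -> \sum_(p <- Delta one) f [:: p.1; p.2] = f [:: one; one].
Proof. by move=> linf; have := Delta_one linf; rewrite !tens_eval_map1 big_seq1. Qed.

Lemma delta_eval_mul F : bilinear F -> forall x y,
  delta_eval F (mul x y) = delta_eval (fun a b => F a (mul b y)) x
                           + delta_eval (fun a b => F (mul x a) b) y + F x y.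
Proof.
move=> linF x y; have := Delta_mul x y (multilinear_pair_app linF).
rewrite !tens_eval_cat !tens_eval_map1 /tens_eval big_seq1 /= scaleN1r /delta_eval => ->.
under eq_bigr do rewrite mulx1.
under [in X in _ + (X - _)]eq_bigr do rewrite mul1x.
by rewrite mulx1 mul1x !addrA subrK (ACl (1*3*5*2*4)).
Qed.

Lemma delta_eval_coassoc g x : multilinear g ->
  delta_eval (fun a b => delta_eval (fun u v => g [:: u; v; b]) a) x =
  delta_eval (fun a b => delta_eval (fun u v => g [:: a; u; v]) b) x.
Proof.
move=> ling; have := Delta_coassoc x ling; rewrite !tens_eval_allpairs1 => sum_coassoc.
rewrite /delta_eval !sumrB sum_coassoc.
rewrite (Delta_one_eval (multilinear_catr [:: x] ling)).
rewrite (Delta_one_eval (multilinear_cons x ling)) /=.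
by rewrite !opprB !addrA !addrK (ACl (1*6*2*5*7*4*3)).
Qed.

End DeltaEval.

Lemma linear_delta_eval (W W' : lmodType K) (L : W -> W') : linear L ->
  forall (F : H -> H -> W) y, L (delta_eval F y) = delta_eval (fun a b => L (F a b)) y.
Proof. by move=> linL F y; rewrite /delta_eval !(linear_mapB linL) (linear_map_sum linL). Qed.

Section DeltaPull.
Variable W : lmodType K.
Implicit Types (g : seq H -> W).

Definition delta_pull g (l : seq H) : W :=
  delta_eval (fun u v => g [:: u, v & behead l]) (head 0 l).

Lemma tens_eval_delta_first g s :
  tens_eval g (delta_first one Delta s) = tens_eval (delta_pull g) s.
Proof.
rewrite /delta_first /tens_eval big_flatten big_map; apply: eq_bigr => p _.
rewrite big_map /delta_pull -(tens_eval_delta (fun l => g (l ++ behead p.2))) scaler_sumr.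
by apply: eq_bigr => q _; rewrite scalerA.
Qed.

Lemma tens_eval_deltan g n x : tens_eval g (deltan n x) = iter n delta_pull g [:: x].
Proof.
elim: n g => [|n IHn] g /=; first by rewrite /tens_eval big_seq1 scale1r.
by rewrite tens_eval_delta_first IHn -iterSr.
Qed.

Lemma iter_pull_vanish n g x :
  teq (deltan n x) [::] -> multilinear g -> iter n delta_pull g [:: x] = 0.
Proof. by move=> dnx0 ling; rewrite -tens_eval_deltan dnx0 // tens_eval_nil. Qed.

Lemma iter_pullS1 n g x :
  iter n.+1 delta_pull g [:: x] = delta_eval (fun a b => iter n delta_pull g [:: a; b]) x.
Proof. by []. Qed.

Lemma multilinear_delta_pull g : multilinear g -> multilinear (delta_pull g).
Proof.
move=> ling [|w l1] l2 a x y; first exact: (delta_eval_linear (bilinear_cons2 l2 ling)).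
rewrite /delta_pull /= -delta_evalZ -delta_evalD; apply: eq_delta_eval => u v.
exact: (ling [:: u, v & l1]).
Qed.

Lemma multilinear_iter_pull n g : multilinear g -> multilinear (iter n delta_pull g).
Proof. by move=> ling; elim: n => //= n; apply: multilinear_delta_pull. Qed.

Lemma eq_iter_pull n g1 g2 l0 : l0 != [::] ->
    (forall l, size l = (n + size l0)%N -> g1 l = g2 l) ->
  iter n delta_pull g1 l0 = iter n delta_pull g2 l0.
Proof.
elim: n l0 => [|n IHn] [|w l0] //= _ eq_g; first exact: eq_g.
apply: eq_delta_eval => u v; apply: IHn => // l size_l; apply: eq_g.
by rewrite size_l /= !addnS.
Qed.

Lemma iter_pull_cons n g a r :
  iter n delta_pull g (a :: r) = iter n delta_pull (fun l => g (l ++ r)) [:: a].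
Proof.
elim: n g a r => [|n IHn] g a r //=; apply: eq_delta_eval => u v.
rewrite IHn (IHn _ u [:: v]); apply: eq_iter_pull => // l _.
by rewrite -catA.
Qed.

End DeltaPull.

Arguments delta_pull {W} g l.

Lemma linear_iter_pull (W W' : lmodType K) (L : W -> W') : linear L ->
  forall n (g : seq H -> W) l,
  iter n delta_pull (fun l => L (g l)) l = L (iter n delta_pull g l).
Proof.
move=> linL n g; elim: n => [|n IHn] l //=.
by rewrite /delta_pull (linear_delta_eval linL); apply: eq_delta_eval => u v.
Qed.

Lemma foldl_mul_linear l : linear (foldl mul ^~ l).
Proof. by elim: l => [|w l IHl] a u v //=; rewrite (mul_bilinear.1 w) IHl. Qed.

Lemma multilinear_omega : multilinear omega.
Proof.
move=> [|w l1] l2 a x y /=; first exact: foldl_mul_linear.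
by rewrite !foldl_cat /= (mul_bilinear.2 _) foldl_mul_linear.
Qed.

Lemma omega_cat1 l b : l != [::] -> omega (l ++ [:: b]) = mul (omega l) b.
Proof. by case: l => // w l _ /=; rewrite foldl_cat. Qed.

Definition omega_deltan n x : H := iter n delta_pull omega [:: x].

Lemma omega_deltan_linear n : linear (omega_deltan n).
Proof. exact: (multilinear_iter_pull n multilinear_omega [::] [::]). Qed.

Lemma omega_deltanS n x :
  omega_deltan n.+1 x = delta_eval (fun a b => mul (omega_deltan n a) b) x.
Proof.
rewrite /omega_deltan iter_pullS1; apply: eq_delta_eval => a b.
rewrite iter_pull_cons -(linear_iter_pull (mul_bilinear.1 b)).
apply: eq_iter_pull => // l; rewrite addn1; case: l => // w l _.
exact: omega_cat1.
Qed.

Definition e_sum N x : H := \sum_(n < N) (-1) ^+ n *: omega_deltan n x.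

Lemma e_sum_linear N : linear (e_sum N).
Proof.
move=> a x y; rewrite /e_sum scaler_sumr -big_split; apply: eq_bigr => n _ /=.
by rewrite omega_deltan_linear scalerDr !scalerA mulrC.
Qed.

Lemma e_sumS N x : e_sum N.+1 x = x - delta_eval (fun a b => mul (e_sum N a) b) x.
Proof.
rewrite /e_sum big_ord_recl expr0 scale1r; congr (_ + _).
under eq_delta_eval do rewrite (linear_map_sum (mul_bilinear.1 _)).
rewrite delta_eval_sum -sumrN; apply: eq_bigr => n _.
under eq_delta_eval do rewrite (linear_mapZ (mul_bilinear.1 _)).
by rewrite delta_evalZ -omega_deltanS exprS mulN1r scaleNr.
Qed.

(* e_trunc 0 and e_trunc 1 are both the identity. *)
Lemma e_trunc_sum N x : e_trunc mul one Delta N x = e_sum (maxn N 1) x.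
Proof.
rewrite /e_trunc /e_sum; case: N => [|N].
  by rewrite big_geq // big_ord1 expr0 scale1r addr0.
rewrite (maxn_idPl (ltn0Sn N)) big_ord_recl expr0 scale1r big_add1 big_mkord /=.
congr (_ + _); apply: eq_bigr => n _.
by rewrite -[delta_first _ _ _]/(deltan n.+1 x) tens_eval_deltan.
Qed.

Lemma e_sum_stable x L : (forall n, (L <= n)%N -> teq (deltan n x) [::]) ->
  forall M, (L <= M)%N -> e_sum M x = e_sum L x.
Proof.
move=> dnx0; elim=> [|M IHM]; first by rewrite leqn0 => /eqP ->.
rewrite leq_eqVlt => /orP[/eqP -> //|le_LM].
rewrite /e_sum big_ord_recr /= -/(e_sum M x) IHM //.
rewrite /omega_deltan iter_pull_vanish ?scaler0 ?addr0 //.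
  exact: dnx0.
exact: multilinear_omega.
Qed.

Section OmegaSplit.
Variable W : lmodType K.
Implicit Types F : H -> H -> W.

Definition omega_split F k (l : seq H) : W := F (omega (take k l)) (omega (drop k l)).

Definition omega_splits N F x : W :=
  \sum_(1 <= k < N.+1) iter N delta_pull (omega_split F k) [:: x].

Lemma multilinear_omega_split F k : bilinear F -> multilinear (omega_split F k).
Proof.
move=> linF l1 l2 a x y; rewrite /omega_split !take_cat !drop_cat.
case: ltnP => _; first by rewrite !multilinear_omega (linF.2 _).
case: (k - size l1)%N => [|j] /=; last by rewrite !multilinear_omega (linF.1 _).
by rewrite !cats0 foldl_mul_linear (linF.2 _).
Qed.

Lemma omega_splitsS N F x : bilinear F ->
  omega_splits N.+1 F x =
    delta_eval (fun a b => omega_splits N (fun u v => F u (mul v b)) a) x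
    + delta_eval (fun a b => F (omega_deltan N a) b) x.
Proof.
move=> linF; rewrite /omega_splits big_nat_recr //; congr (_ + _).
  rewrite delta_eval_sum; apply: eq_big_nat => k /andP[k_gt0 k_le].
  rewrite iter_pullS1; apply: eq_delta_eval => a b; rewrite iter_pull_cons.
  apply: eq_iter_pull => // l; rewrite addn1 => size_l.
  rewrite /omega_split take_cat drop_cat size_l k_le omega_cat1 //.
  by rewrite -size_eq0 size_drop size_l subn_eq0 -ltnNge.
rewrite iter_pullS1; apply: eq_delta_eval => a b.
rewrite iter_pull_cons /omega_deltan -(linear_iter_pull (linF.1 b)).
apply: eq_iter_pull => // l; rewrite addn1 => size_l.
by rewrite /omega_split take_cat drop_cat size_l ltnn subnn /= cats0.
Qed.

(* The part (e_N x' ⊗ 1)δ(x'') + e_N x' ⊗ x'' of δ(e_N(x') x''), summed over δ(x) = x' ⊗ x'':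
   coassociativity moves the inner δ onto x', where e_sumS applies. *)
Lemma delta_eval_e_sum_mul N F x : bilinear F ->
  delta_eval (fun a b => delta_eval (fun u v => F (mul (e_sum N a) u) v) b + F (e_sum N a) b) x
  = delta_eval F x - (-1) ^+ N *: delta_eval (fun a b => F (omega_deltan N a) b) x.
Proof.
move=> linF.
have linG : multilinear (triple_app (fun a u v => F (mul (e_sum N a) u) v)).
  apply: multilinear_triple_app => [u v c a a'|a v c u u'|a u].
  - by rewrite e_sum_linear (mul_bilinear.1 u) (linF.1 v).
  - by rewrite (mul_bilinear.2 _) (linF.1 v).
  - exact: linF.2.
have e_sumS_eval a b :
    delta_eval (fun u v => F (mul (e_sum N u) v) b) a = F (a - e_sum N.+1 a) b.
  by rewrite e_sumS subKr; symmetry; exact: (linear_delta_eval (linF.1 b)).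
rewrite delta_evalD -(delta_eval_coassoc _ linG) -delta_evalD.
rewrite -scaleNr -delta_evalZ -delta_evalD; apply: eq_delta_eval => a b /=.
rewrite e_sumS_eval /e_sum big_ord_recr /= -/(e_sum N a).
rewrite (linear_mapB (linF.1 b)) (linear_mapD (linF.1 b)) (linear_mapZ (linF.1 b)).
by rewrite scaleNr opprD addrA addrAC subrK.
Qed.

Lemma delta_eval_e_sum N F x : bilinear F ->
  delta_eval F (e_sum N x) = (-1) ^+ N.+1 *: omega_splits N F x.
Proof.
elim: N F x => [|N IHN] F x linF.
  rewrite /e_sum big_ord0 (linear_map0 (delta_eval_linear linF)).
  by rewrite /omega_splits big_geq ?scaler0.
have IH_mulr a b : delta_eval (fun u v => F u (mul v b)) (e_sum N a) =
                   (-1) ^+ N.+1 *: omega_splits N (fun u v => F u (mul v b)) a.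
  exact/IHN/(bilinear_compr (mul_bilinear.1 b)).
have lin_dF := delta_eval_linear linF.
rewrite e_sumS (linear_mapB lin_dF) (linear_delta_eval lin_dF).
under [in X in _ - X = _]eq_delta_eval do rewrite (delta_eval_mul linF) -addrA IH_mulr.
rewrite delta_evalD delta_evalZ delta_eval_e_sum_mul // omega_splitsS //.
move: (delta_eval F x) (delta_eval (fun a b => omega_splits N _ a) x)
  (delta_eval (fun a b => F (omega_deltan N a) b) x) => d A B.
by rewrite !exprS !mulN1r opprK scaleNr scalerDr opprD opprK opprB addrCA subrKC.
Qed.

End OmegaSplit.

Lemma delta_eval_omega_r (W : lmodType K) xs (F : H -> H -> W) :
    bilinear F -> xs != [::] -> (forall z, z \in xs -> Prim z) ->
  delta_eval F (omega_r mul xs) =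
    \sum_(1 <= k < size xs) F (omega_r mul (take k xs)) (omega_r mul (drop k xs)).
Proof.
elim: xs F => [|x [|y ys] IH] F linF // _ prim_xs; have prim_x := prim_xs x (mem_head _ _).
  by rewrite big_geq // (delta_eval_prim prim_x linF).
rewrite [omega_r _ _]/= (delta_eval_mul linF).
rewrite (delta_eval_prim prim_x (bilinear_compr (mul_bilinear.1 _) linF)) add0r.
rewrite IH //; last 2 first.
- exact: (bilinear_compl (mul_bilinear.2 x)).
- by move=> z z_ys; apply: prim_xs; rewrite in_cons z_ys orbT.
by rewrite [in RHS]big_nat_recl // addrC; congr (_ + _); apply: eq_big_nat => -[|k].
Qed.

Lemma iter_pull_omega_r (W : lmodType K) n xs (g : seq H -> W) :
    multilinear g -> xs != [::] -> (forall z, z \in xs -> Prim z) -> (size xs <= n)%N ->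
  iter n delta_pull g [:: omega_r mul xs] = 0.
Proof.
elim: n xs g => [|n IHn] [|x xs] g ling // _ prim_xs size_xs.
rewrite iter_pullS1 (delta_eval_omega_r (bilinear_cons2 [::] (multilinear_iter_pull n ling))) //.
apply: big1_seq => k /andP[_]; rewrite mem_index_iota => /andP[k_gt0 k_lt].
have size_take : size (take k (x :: xs)) = k := size_takel (ltnW k_lt).
rewrite iter_pull_cons IHn //.
- exact: multilinear_catr ling.
- by rewrite -size_eq0 size_take -lt0n.
- by move=> z /mem_take; apply: prim_xs.
- by rewrite size_take -ltnS (leq_trans k_lt).
Qed.

Lemma e_sum_omega_r N xs :
    xs != [::] -> (forall z, z \in xs -> Prim z) -> (size xs <= N)%N ->
  e_sum N (omega_r mul xs) = if size xs == 1%N then omega_r mul xs else 0.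
Proof.
elim: N xs => [|N IHN] [|x xs] // _ prim_xs size_xs.
rewrite e_sumS (delta_eval_omega_r (bilinear_compl (e_sum_linear N) mul_bilinear)) //.
case: xs prim_xs size_xs => [|y ys] prim_xs size_xs; first by rewrite big_geq ?subr0.
have prim_take k : forall z, z \in take k [:: x, y & ys] -> Prim z.
  by move=> z /mem_take; apply: prim_xs.
rewrite [size _]/= big_nat_recl // big1_seq => [|k /andP[_]]; last first.
  rewrite mem_index_iota => /andP[k_gt0 k_lt].
  have size_take : size (take k.+1 [:: x, y & ys]) = k.+1.
    exact: (size_takel (s := [:: x, y & ys]) (leqW k_lt)).
  rewrite (IHN _ _ (prim_take _)) ?size_take ?eqSS ?gtn_eqF //.
    by rewrite (linear_map0 (mul_bilinear.1 _)).
  exact: leq_trans k_lt size_xs.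
by rewrite (IHN _ _ (prim_take 1)) //= ?addr0 ?subrr //; case: N {IHN} size_xs.
Qed.

Lemma level_spec x : (exists N, forall n, (N <= n)%N -> teq (deltan n x) [::]) ->
  forall n, (level one Delta x <= n)%N -> teq (deltan n x) [::].
Proof. exact: epsilon_spec. Qed.

Lemma e_omega_r_prim xs : (2 <= size xs)%N -> (forall x, x \in xs -> Prim x) ->
  e mul one Delta (omega_r mul xs) = 0.
Proof.
move=> size_xs prim_xs; have xs_neq0 : xs != [::] by case: xs size_xs {prim_xs}.
have deltan_vanish : forall n, (size xs <= n)%N -> teq (deltan n (omega_r mul xs)) [::].
  move=> n size_le W g ling; rewrite tens_eval_deltan tens_eval_nil.
  exact: iter_pull_omega_r.
have stable := e_sum_stable (level_spec (ex_intro _ _ deltan_vanish)).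
rewrite /e e_trunc_sum (stable _ (leq_maxl _ 1)) -(stable _ (leq_maxl _ (size xs))).
by rewrite e_sum_omega_r ?leq_maxr // gtn_eqF.
Qed.

Lemma delta_e (conn : connected one eps Delta) x :
  barH eps x -> teq (delta (e mul one Delta x)) [::].
Proof.
move=> x_bar W f linf; rewrite tens_eval_nil tens_eval_delta /e e_trunc_sum.
rewrite (delta_eval_e_sum _ _ (bilinear_cons2 [::] linf)) /omega_splits.
rewrite big1 ?scaler0 // => k _; apply: iter_pull_vanish.
  exact/(level_spec (conn x x_bar))/leq_maxl.
exact: multilinear_omega_split (bilinear_cons2 [::] linf).
Qed.

Lemma e_prim x : Prim x -> e mul one Delta x = x.
Proof.
move=> prim_x; rewrite /e e_trunc_sum (e_sum_omega_r (xs := [:: x])) ?leq_maxr //.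
by move=> z /[!inE] /eqP ->.
Qed.

End Bialgebra.

Theorem lemma4p2 (K : fieldType) (H : lmodType K) (mul : H -> H -> H) (one : H)
  (eps : H -> K) (Delta : H -> seq (H * H))
  (hB : is_AsMag_bialgebra mul one eps Delta)
  (hC : connected one eps Delta) :
  [/\ (forall xs : seq H, (2 <= size xs)%N ->
          (forall x, x \in xs -> Prim one eps Delta x) ->
          e mul one Delta (omega_r mul xs) = 0),
      (forall x, barH eps x -> teq (delta one Delta (e mul one Delta x)) [::]) &
      (forall x, Prim one eps Delta x -> e mul one Delta x = x)].
Proof.
have [mulDl [mulDr [mul1 [_ [Delta_lin [coassoc [_ [Delta1 Delta_mul]]]]]]]] := hB.
have mul_bilinear : bilinear mul by split=> z a x y; [exact: mulDl | exact: mulDr].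
have mul1x x : mul one x = x := (mul1 x).1.
have mulx1 x : mul x one = x := (mul1 x).2.
split; [exact: e_omega_r_prim | exact: delta_e | exact: e_prim].
Qed.
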